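(* Assume AS.1, AS.3, AS.4 and AS.5, and consider a realization of the SKOFFAR$p$ algorithm in which $\mathcal K_1$ occurs. Then $$f(x_{k_1})\le f_{\max}\stackrel{\rm def}{=} f(x_0)+\frac{1}{(p+1)!}\left(\frac{L_p}{\sigma_0}\nu_{\max}+\vartheta\sigma_0\right),$$ where $\sigma_0=\nu_0$ and $$\nu_{\max}=\frac{2L_p}{\vartheta}\left[1+\left(2\eta+2\left(\frac{(p+1)!\,\kappa_g}{\vartheta\nu_0}\right)^{1/p}\right)^{p+1}\right],\qquad \eta=\sum_{i=2}^{p}\left[\frac{\kappa_{\rm high}(p+1)!}{i!\,\vartheta\nu_0}\right]^{\frac{1}{p-i+1}}$$ (with $\eta=0$ when $p=1$).
   Context: Let $f:\mathbb{R}^n\to\mathbb{R}$ and $p\ge1$ an integer; $\|\cdot\|$ is the Euclidean norm for vectors, the spectral norm for matrices and the induced (subordinate) norm for tensors; $T[d]^i$ denotes a symmetric $i$-tensor applied to $i$ copies of $d$. Assumptions: AS.1: $f$ is $p$ times continuously differentiable on $\mathbb{R}^n$. AS.3: there is $L_p\ge 0$ with $\|\nabla^p f(x)-\nabla^p f(y)\|\le L_p\|x-y\|$ for all $x,y$. AS.4: there is $\kappa_g\ge0$ with $\|\nabla f(x)\|\le\kappa_g$ for all $x$. AS.5: if $p>1$ there is $\kappa_{\rm high}\ge0$ with $\min_{\|d\|\le1}\nabla^i f(x)[d]^i\ge-\kappa_{\rm high}$ for all $x$ and $i\in\{2,\dots,p\}$ (set $\kappa_{\rm high}=0$ if $p=1$).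 For $x,s\in\mathbb{R}^n$ let $T_{f,p}(x,s)=f(x)+\sum_{i=1}^p\frac{1}{i!}\nabla^i f(x)[s]^i$. Write $g_k=\nabla f(x_k)$. The SKOFFAR$p$ algorithm: given $x_0\in\mathbb{R}^n$, $\nu_0>0$, $\epsilon\in(0,1]$, $\theta>1$, $\mu_{-1}\ge 0$, $\vartheta\in(0,1)$ and a fixed distribution $\mathcal S$ of $\ell\times n$ random matrices ($\ell<n$), for $k=0,1,2,\dots$: (i) if $k=0$ set $\sigma_0=\nu_0$; otherwise choose $\sigma_k\in[\vartheta\nu_k,\max(\nu_k,\mu_k)]$, where $\mu_k=\max\Big[\mu_{k-1},\frac{\|S_{k-1}g_k\|-\|\nabla_{\hat s}\widehat T_{k-1}(\hat s_{k-1})\|}{\kappa_{S,k-1}\|s_{k-1}\|^p}\Big]$ for some number $\kappa_{S,k-1}\ge\|S_{k-1}\|$; (ii) draw $S_k\in\mathbb{R}^{\ell\times n}$ from $\mathcal S$, define for $\hat s\in\mathbb{R}^\ell$ the sketched Taylor model $\widehat T_k(\hat s)=T_{f,p}(x_k,S_k^T\hat s)$ and the sketched model $\widehat m_k(\hat s)=\widehat T_k(\hat s)+\frac{\sigma_k}{(p+1)!}\|S_k^T\hat s\|^{p+1}$, and compute $\hat s_k\in\mathbb{R}^\ell$ with $\widehat m_k(\hat s_k)<\widehat m_k(0)$ and $\|\nabla_{\hat s}\widehat T_k(\hat s_k)\|\le\theta\frac{\sigma_k}{p!}\|S_k^T\hat s_k\|^{p-1}\|S_kS_k^T\hat s_k\|$;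 set $s_k=S_k^T\hat s_k$; (iii) set $x_{k+1}=x_k+s_k$ and $\nu_{k+1}=\nu_k+\nu_k\|s_k\|^{p+1}$. Define $k_1=\inf\{k\ge1:\nu_k\ge 2L_p/\vartheta\}$ and let $\mathcal K_1$ be the event that $k_1<\infty$. *)

From HB Require Import structures.
From mathcomp Require Import all_boot all_order all_algebra.
From mathcomp Require Import all_classical all_reals all_analysis.
Set Implicit Arguments. Unset Strict Implicit. Unset Printing Implicit Defensive.
Import Order.TTheory GRing.Theory Num.Theory.
Import numFieldNormedType.Exports.
Local Open Scope ring_scope.

Section Defs.
Variable R : realType.

Definition enorm (m : nat) (v : 'cV[R]_m) : R := Num.sqrt (\sum_(i < m) v i 0 ^+ 2).

(* Dn f i x [:: v1; ...; vi] = nabla^i f(x)[v1,...,vi], defined as iterated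
   directional derivatives (MathComp-Analysis 'D_v). *)
Fixpoint Dn (m : nat) (f : 'cV[R]_m -> R) (i : nat) (x : 'cV[R]_m) (vs : seq 'cV[R]_m) : R :=
  match i, vs with
  | 0, _ => f x
  | i'.+1, v :: vs' => 'D_v (fun y => Dn f i' y vs') x
  | _.+1, [::] => 0
  end.

Definition grad (m : nat) (h : 'cV[R]_m -> R) (x : 'cV[R]_m) : 'cV[R]_m :=
  \col_(j < m) 'D_(delta_mx j 0 : 'cV[R]_m) h x.

Definition Tfp (m : nat) (f : 'cV[R]_m -> R) (p : nat) (x s : 'cV[R]_m) : R :=
  f x + \sum_(1 <= i < p.+1) (i`!%:R)^-1 * Dn f i x (nseq i s).

(* AS.1: f is p times continuously differentiable (all iterated derivatives of
   order < p are Frechet differentiable, the p-th one is continuous). *)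
Definition AS1 (m : nat) (f : 'cV[R]_m -> R) (p : nat) : Prop :=
  (forall i vs, (i < p)%N -> size vs = i ->
     forall x, differentiable (fun y => Dn f i y vs) x) /\
  (forall vs, size vs = p -> continuous (fun y => Dn f p y vs)).

(* AS.3: ||nabla^p f(x) - nabla^p f(y)|| <= Lp ||x - y|| with the induced tensor norm. *)
Definition AS3 (m : nat) (f : 'cV[R]_m -> R) (p : nat) (Lp : R) : Prop :=
  0 <= Lp /\
  forall x y vs, size vs = p -> all (fun v => enorm v <= 1) vs ->
    `|Dn f p x vs - Dn f p y vs| <= Lp * enorm (x - y).

Definition AS4 (m : nat) (f : 'cV[R]_m -> R) (kg : R) : Prop :=
  0 <= kg /\ forall x, enorm (grad f x) <= kg.

Definition AS5 (m : nat) (f : 'cV[R]_m -> R) (p : nat) (khigh : R) : Prop :=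
  0 <= khigh /\
  forall x i d, (2 <= i <= p)%N -> enorm d <= 1 -> - khigh <= Dn f i x (nseq i d).

Definition That (n l : nat) (f : 'cV[R]_n -> R) (p : nat) (x : 'cV[R]_n)
  (S : 'M[R]_(l, n)) (sh : 'cV[R]_l) : R := Tfp f p x (S^T *m sh).

Definition mhat (n l : nat) (f : 'cV[R]_n -> R) (p : nat) (x : 'cV[R]_n)
  (S : 'M[R]_(l, n)) (sigma : R) (sh : 'cV[R]_l) : R :=
  That f p x S sh + sigma / (p.+1)`!%:R * enorm (S^T *m sh) ^+ p.+1.

(* mu k = mu_k for k >= 1 ; mu 0 = mu_{-1} (stands for mu_0) *)
Fixpoint mu_seq (n l : nat) (f : 'cV[R]_n -> R) (p : nat) (mum1 : R)
  (x : nat -> 'cV[R]_n) (S : nat -> 'M[R]_(l, n)) (sh : nat -> 'cV[R]_l)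
  (kS : nat -> R) (k : nat) : R :=
  match k with
  | 0 => mum1
  | k'.+1 => Num.max (mu_seq f p mum1 x S sh kS k')
      ((enorm (S k' *m grad f (x k'.+1)) - enorm (grad (That f p (x k') (S k')) (sh k')))
        / (kS k' * enorm ((S k')^T *m sh k') ^+ p))
  end.

Definition skoffar_realization (n l : nat) (f : 'cV[R]_n -> R) (p : nat)
  (nu0 theta mum1 vth : R)
  (x : nat -> 'cV[R]_n) (S : nat -> 'M[R]_(l, n)) (sh : nat -> 'cV[R]_l)
  (sigma nu kS : nat -> R) : Prop :=
  nu 0 = nu0 /\
  sigma 0 = nu0 /\
  (forall k, (1 <= k)%N ->
     vth * nu k <= sigma k <= Num.max (nu k) (mu_seq f p mum1 x S sh kS k)) /\
  (forall k v, enorm (S k *m v) <= kS k * enorm v) /\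
  (forall k, mhat f p (x k) (S k) (sigma k) (sh k) < mhat f p (x k) (S k) (sigma k) 0) /\
  (forall k, enorm (grad (That f p (x k) (S k)) (sh k)) <=
     theta * (sigma k / p`!%:R) * enorm ((S k)^T *m sh k) ^+ p.-1
       * enorm (S k *m (S k)^T *m sh k)) /\
  (forall k, x k.+1 = x k + (S k)^T *m sh k) /\
  (forall k, nu k.+1 = nu k + nu k * enorm ((S k)^T *m sh k) ^+ p.+1).

Definition eta_const (p : nat) (khigh vth nu0 : R) : R :=
  \sum_(2 <= i < p.+1)
     (khigh * (p.+1)`!%:R / (i`!%:R * vth * nu0)) `^ ((p - i + 1)%:R^-1).

Definition nu_max (p : nat) (Lp kg khigh vth nu0 : R) : R :=
  2 * Lp / vth * (1 + (2 * eta_const p khigh vth nu0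
     + 2 * ((p.+1)`!%:R * kg / (vth * nu0)) `^ (p%:R^-1)) ^+ p.+1).

Definition f_max (n : nat) (f : 'cV[R]_n -> R) (x0 : 'cV[R]_n) (p : nat)
  (Lp kg khigh vth nu0 : R) : R :=
  let sigma0 := nu0 in
  f x0 + ((p.+1)`!%:R)^-1 * (Lp / sigma0 * nu_max p Lp kg khigh vth nu0 + vth * sigma0).

End Defs.

From HB Require Import structures.
From mathcomp Require Import all_boot all_order all_algebra.
From mathcomp Require Import all_classical all_reals all_analysis.
From mathcomp Require Import zify ring lra.
Set Implicit Arguments. Unset Strict Implicit. Unset Printing Implicit Defensive.
Import Order.TTheory GRing.Theory Num.Theory.
Import numFieldNormedType.Exports.
Local Open Scope ring_scope.

(* Along a segment x + t s the functions t |-> Dn f j (x + t s) [s]^j are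
   successive derivatives and the last one is Lp |s|^(p+1)-Lipschitz, so
   comparing them with polynomials gives the Taylor bound
   f (x + s) <= T_{f,p}(x, s) + Lp |s|^(p+1) / (p+1)!.  With the decrease of
   the sketched model this yields f(x_{k+1}) <= f(x_k) + (Lp - sigma_k) |s_k|^(p+1) / (p+1)!,
   and since nu_{k+1} - nu_k = nu_k |s_k|^(p+1) the increase of f up to step k
   is at most Lp (nu_k - nu_0) / (nu_0 (p+1)!).  The same model decrease,
   combined with the lower bounds of AS.4 and AS.5 on the Taylor terms, makes
   vth nu_0 |s_k|^(p+1) / (p+1)! smaller than a polynomial of degree p in |s_k|,
   which bounds every step by 2 eta + 2 ((p+1)! kg / (vth nu_0))^(1/p).  At k_1,
   either sigma_{k_1-1} >= Lp and the last step did not increase f, or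
   nu_{k_1-1} <= 2 Lp / vth and the step bound gives nu_{k_1} <= nu_max. *)

Section EuclideanNorm.
Variables (R : realType) (n : nat).
Implicit Types (u v : 'cV[R]_n).

Lemma enorm_ge0 v : 0 <= enorm v.
Proof. exact: sqrtr_ge0. Qed.

Lemma enormZ (c : R) v : enorm (c *: v) = `|c| * enorm v.
Proof.
rewrite /enorm -sqrtr_sqr -sqrtrM ?sqr_ge0 // mulr_sumr.
by congr Num.sqrt; apply: eq_bigr => i _; rewrite mxE exprMn.
Qed.

Lemma enorm0 : enorm (0 : 'cV[R]_n) = 0.
Proof. by rewrite -(scale0r 0) enormZ normr0 mul0r. Qed.

Lemma enorm_eq0 v : enorm v = 0 -> v = 0.
Proof.
move/eqP; rewrite sqrtr_eq0 => sum_le0.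
have sum0 : \sum_(i < n) v i 0 ^+ 2 = 0.
  by apply/eqP; rewrite eq_le sum_le0 sumr_ge0 // => i _; exact: sqr_ge0.
apply/matrixP => i j; rewrite ord1 mxE; apply/eqP; rewrite -sqrf_eq0.
by apply/eqP; exact: (psumr_eq0P (fun i _ => sqr_ge0 (v i 0)) sum0).
Qed.

Lemma enorm_polar v : exists2 u, enorm u <= 1 & v = enorm v *: u.
Proof.
have [->|v0] := eqVneq v 0; first by exists 0; rewrite ?enorm0 ?scaler0.
have r0 : enorm v != 0 by apply: contra_neq v0 => /enorm_eq0.
exists ((enorm v)^-1 *: v); last by rewrite scalerA divff // scale1r.
by rewrite enormZ ger0_norm ?invr_ge0 ?enorm_ge0 // mulVf.
Qed.

Lemma enorm_CauchySchwarz u v :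
  `|\sum_i u i 0 * v i 0| <= enorm u * enorm v.
Proof.
set A := \sum_i u i 0 ^+ 2; set B := \sum_i v i 0 ^+ 2; set C := \sum_i u i 0 * v i 0.
have A0 : 0 <= A by apply: sumr_ge0 => i _; exact: sqr_ge0.
have B0 : 0 <= B by apply: sumr_ge0 => i _; exact: sqr_ge0.
rewrite -sqrtrM // -sqrtr_sqr ler_sqrt ?mulr_ge0 //.
have discr t : 0 <= t ^+ 2 * A - 2 * t * C + B.
  have -> : t ^+ 2 * A - 2 * t * C + B = \sum_i (u i 0 * t - v i 0) ^+ 2.
    rewrite /A /B /C !mulr_sumr -sumrN -!big_split /=.
    by apply: eq_bigr => i _; ring.
  by apply: sumr_ge0 => i _; exact: sqr_ge0.
have [A_eq0|A_neq0] := eqVneq A 0.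
  have u0 i : u i 0 = 0.
    apply/eqP; rewrite -sqrf_eq0; apply/eqP.
    exact: (psumr_eq0P (fun i _ => sqr_ge0 (u i 0)) A_eq0).
  by rewrite /C big1 ?expr0n ?mulr_ge0 // => i _; rewrite u0 mul0r.
have A_gt0 : 0 < A by rewrite lt_neqAle eq_sym A_neq0.
have := discr (C / A).
have -> : (C / A) ^+ 2 * A - 2 * (C / A) * C + B = B - C ^+ 2 / A by field.
by rewrite subr_ge0 ler_pdivrMr // mulrC.
Qed.

End EuclideanNorm.

Lemma is_derive_line (R : realType) (n : nat) (G : 'cV[R]_n -> R) (x s : 'cV[R]_n) (t : R) :
  derivable G (x + t *: s) s ->
  is_derive t 1 (fun u : R => G (x + u *: s)) ('D_s G (x + t *: s)).
Proof.
have quotE : (fun h : R => h^-1 *: (((fun u : R => G (x + u *: s)) \o shift t) (h *: 1)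
                                     - G (x + t *: s)))
           = (fun h : R => h^-1 *: ((G \o shift (x + t *: s)) (h *: s) - G (x + t *: s))).
  by apply/funext => h /=; rewrite [h%:A]mulr1 scalerDl addrCA.
move=> dG; have -> : 'D_s G (x + t *: s) = 'D_1 (fun u : R => G (x + u *: s)) t.
  by rewrite /derive quotE.
by apply: derivableP; rewrite /derivable quotE.
Qed.

Lemma derive_grad (R : realType) (n : nat) (h : 'cV[R]_n -> R) (y s : 'cV[R]_n) :
  differentiable h y -> 'D_s h y = \sum_j s j 0 * grad h y j 0.
Proof.
move=> dh; have sE : s = \sum_(j < n) s j 0 *: (delta_mx j 0 : 'cV[R]_n).
  apply/matrixP => i k; rewrite ord1 summxE (bigD1 i) //= big1 ?addr0.
    by rewrite !mxE !eqxx mulr1.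
  by move=> j ji; rewrite !mxE eq_sym (negbTE ji) mulr0.
rewrite deriveE // {1}sE linear_sum; apply: eq_bigr => j _.
by rewrite linearZ /= -deriveE // mxE.
Qed.

Section IteratedDerivatives.
Variables (R : realType) (n p : nat) (f : 'cV[R]_n -> R).
Hypothesis f_smooth : AS1 f p.

Lemma differentiable_Dn i vs y : (i < p)%N -> size vs = i ->
  differentiable (fun z => Dn f i z vs) y.
Proof. by case: f_smooth => df _ ip vsi; exact: df. Qed.

Lemma Dn_nseqZ i (c : R) u y : (i <= p)%N ->
  Dn f i y (nseq i (c *: u)) = c ^+ i * Dn f i y (nseq i u).
Proof.
elim: i y => [|i IH] y ip /=; first by rewrite expr0 mul1r.
have -> : (fun z => Dn f i z (nseq i (c *: u))) = c ^+ i *: (fun z => Dn f i z (nseq i u)).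
  by apply/funext => z; rewrite IH // ltnW.
have dDn := differentiable_Dn y ip (size_nseq i u).
rewrite deriveE; last exact: differentiableZ.
by rewrite diffZ // deriveE //= linearZ /= exprS /GRing.scale /= mulrCA mulrA.
Qed.

Lemma Tfp0 y : Tfp f p y 0 = f y.
Proof.
rewrite /Tfp big_nat_cond big1 ?addr0 // => i /andP[/andP[i_gt0 ip] _].
by rewrite -(scale0r (0 : 'cV[R]_n)) Dn_nseqZ // expr0n gtn_eqF // mul0r mulr0.
Qed.

Lemma is_derive_Dn_line i (x s : 'cV[R]_n) (t : R) : (i < p)%N ->
  is_derive t 1 (fun u : R => Dn f i (x + u *: s) (nseq i s))
    (Dn f i.+1 (x + t *: s) (nseq i.+1 s)).
Proof.
move=> ip; apply: is_derive_line; apply: diff_derivable.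
exact: differentiable_Dn _ ip (size_nseq i s).
Qed.

Lemma Dn_lipschitz Lp y z s : AS3 f p Lp ->
  Dn f p y (nseq p s) - Dn f p z (nseq p s) <= Lp * enorm (y - z) * enorm s ^+ p.
Proof.
move=> [_ f_lip]; have [u u1 su] := enorm_polar s.
rewrite [in nseq p s]su !Dn_nseqZ // -mulrBr mulrC.
rewrite ler_wpM2r ?exprn_ge0 ?enorm_ge0 //; apply: le_trans (ler_norm _) _.
by apply: f_lip; rewrite ?size_nseq // all_nseq u1 orbT.
Qed.

Lemma Dn_ge_khigh kh i y s : AS5 f p kh -> (2 <= i <= p)%N ->
  - (kh * enorm s ^+ i) <= Dn f i y (nseq i s).
Proof.
move=> [_ f_high] /andP[i2 ip]; have [u u1 su] := enorm_polar s.
by rewrite [in nseq i s]su Dn_nseqZ // mulrC -mulrN ler_wpM2l ?exprn_ge0 ?enorm_ge0 // f_high ?i2.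
Qed.

Lemma Dn1_ge_kg kg y s : (0 < p)%N -> AS4 f kg -> - (kg * enorm s) <= Dn f 1 y (nseq 1 s).
Proof.
move=> p_gt0 [_ f_grad]; rewrite /= derive_grad.
  2: exact: (differentiable_Dn (vs := [::]) y p_gt0 erefl).
rewrite lerNl; apply: le_trans (ler_norm _) _; rewrite normrN.
apply: le_trans (enorm_CauchySchwarz s (grad f y)) _.
by rewrite mulrC ler_wpM2r ?enorm_ge0.
Qed.

End IteratedDerivatives.

Section TaylorUpperBound.
Variables (R : realType) (p : nat) (g : nat -> R -> R) (M : R).
Hypothesis g_deriv : forall j (t : R), (j < p)%N -> is_derive t 1 (g j) (g j.+1 t).
Hypothesis g_top : forall t : R, 0 <= t <= 1 -> g p t <= g p 0 + M * t.

(* The Taylor polynomial of [g (p - m)] at 0 of degree m, plus [M t^(m+1)/(m+1)!]. *)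
Let majorant m : {poly R} :=
  \poly_(k < m.+2) ((if k == m.+1 then M else g (p - m + k)%N 0) / k`!%:R).

Let deriv_majorant m : (m < p)%N -> (majorant m.+1)^`() = majorant m.
Proof.
move=> mp; apply/polyP => k; rewrite coef_deriv !coef_poly ltnS.
case: ifP => km; last by rewrite mul0rn.
have k1_neq0 : (k.+1)%:R != 0 :> R by rewrite pnatr_eq0.
have kfact_neq0 : (k`!)%:R != 0 :> R by rewrite pnatr_eq0 -lt0n fact_gt0.
have -> : (p - m.+1 + k.+1 = p - m + k)%N by lia.
rewrite eqSS factS natrM -mulr_natr.
by case: eqP => _; field; rewrite kfact_neq0 nat1r k1_neq0.
Qed.

Let le_majorant m t : (m <= p)%N -> 0 <= t <= 1 -> g (p - m) t <= (majorant m).[t].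
Proof.
elim: m t => [|m IH] t mp /andP[t_ge0 t_le1].
  rewrite /majorant horner_poly !big_ord_recl big_ord0 /= !addn0 subn0 fact0.
  by rewrite !divr1 expr0 mulr1 expr1 addr0 g_top ?t_ge0.
pose psi u := (majorant m.+1).[u] - g (p - m.+1)%N u.
have g_deriv' (u : R) : is_derive u 1 (g (p - m.+1)%N) (g (p - m)%N u).
  by rewrite -[in g (p - m)%N _](subnSK mp); apply: g_deriv; rewrite subnSK // leq_subr.
have dpsi (u : R) : derivable psi u 1 by apply: derivableB => //; exact: derivable_horner.
have : psi 0 <= psi t.
  apply: (@ger0_derive1_ndecr R psi 0 1) => //.
    move=> u; rewrite in_itv /= => /andP[u_gt0 u_lt1].
    rewrite derive1E /psi deriveB // -derive1E -derivE deriv_majorant // derive_val.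
    by rewrite subr_ge0 IH ?(ltW u_gt0) ?(ltW u_lt1) // ltnW.
  by apply: derivable_within_continuous => u _.
by rewrite /psi horner_coef0 coef_poly /= addn0 fact0 divr1 subrr subr_ge0.
Qed.

Lemma taylor_upper_bound :
  g 0 1 <= \sum_(i < p.+1) g i 0 / i`!%:R + M / (p.+1)`!%:R.
Proof.
suff <- : (majorant p).[1] = \sum_(i < p.+1) g i 0 / i`!%:R + M / (p.+1)`!%:R.
  by have := @le_majorant p 1 (leqnn p); rewrite ler01 lexx subnn; apply.
rewrite horner_poly big_ord_recr /= eqxx expr1n mulr1; congr (_ + _).
apply: eq_bigr => k _; rewrite expr1n mulr1 ifN ?subnn ?add0n //.
by rewrite neq_ltn ltn_ord.
Qed.

End TaylorUpperBound.

Lemma Tfp_upper_bound (R : realType) (n p : nat) (f : 'cV[R]_n -> R) (Lp : R)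
    (x s : 'cV[R]_n) :
  AS1 f p -> AS3 f p Lp ->
  f (x + s) <= Tfp f p x s + Lp / (p.+1)`!%:R * enorm s ^+ p.+1.
Proof.
move=> f_smooth f_lip; pose g i (t : R) := Dn f i (x + t *: s) (nseq i s).
have g_top (t : R) : 0 <= t <= 1 -> g p t <= g p 0 + Lp * enorm s ^+ p.+1 * t.
  move=> /andP[t_ge0 _]; rewrite -lerBlDl /g scale0r addr0.
  apply: le_trans (Dn_lipschitz f_smooth _ _ _ f_lip) _.
  rewrite addrAC subrr add0r enormZ ger0_norm // exprS; lra.
have := taylor_upper_bound (g := g) (fun j t jp => is_derive_Dn_line f_smooth x s t jp) g_top.
suff -> : \sum_(i < p.+1) g i 0 / i`!%:R = Tfp f p x s by rewrite /g scale1r mulrAC.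
rewrite -(big_mkord xpredT (fun i => g i 0 / i`!%:R)) big_ltn // /Tfp /g scale0r addr0.
by rewrite fact0 divr1; congr (_ + _); apply: eq_bigr => i _; rewrite mulrC.
Qed.

Definition taylor_term_bound (R : realType) (kg kh : R) (i : nat) : R :=
  if i == 1%N then kg else kh / i`!%:R.

Lemma Tfp_lower_bound (R : realType) (n p : nat) (f : 'cV[R]_n -> R) (kg kh : R)
    (y s : 'cV[R]_n) :
  (0 < p)%N -> AS1 f p -> AS4 f kg -> AS5 f p kh ->
  f y - \sum_(1 <= i < p.+1) taylor_term_bound kg kh i * enorm s ^+ i <= Tfp f p y s.
Proof.
move=> p_gt0 f_smooth f_grad f_high.
rewrite /Tfp -sumrN lerD2l; apply: ler_sum_nat => i /andP[i_gt0 ip].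
rewrite /taylor_term_bound; case: eqP => [->|/eqP i_neq1].
  by rewrite invr1 mul1r expr1 (Dn1_ge_kg f_smooth).
rewrite mulrAC mulrC -mulrN ler_wpM2l ?invr_ge0 ?ler0n // (Dn_ge_khigh f_smooth) //.
by move: i_neq1; lia.
Qed.

Section PowerDomination.
Variable R : realType.

Lemma sum_half_pow p : \sum_(1 <= i < p.+1) (2^-1 : R) ^+ (p - i + 1) = 1 - 2^-1 ^+ p.
Proof.
elim: p => [|p IH]; first by rewrite big_geq // expr0 subrr.
rewrite big_nat_recl // (eq_big_nat _ _ (F2 := fun i => (2^-1 : R) ^+ (p - i + 1))); last first.
  by move=> i _; rewrite subSS.
by rewrite IH subn1 addn1 /= exprS; set w := _ ^+ p; field.
Qed.

Lemma le_half_pow_of_root (c r : R) d : 0 <= c -> (0 < d)%N ->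
  2 * c `^ (d%:R^-1) <= r -> c <= (r / 2) ^+ d.
Proof.
move=> c_ge0 d_gt0 root_le.
have -> : c = (c `^ (d%:R^-1)) ^+ d.
  by rewrite -powR_mulrn ?powR_ge0 // -powRrM mulVf ?powRr1 // pnatr_eq0 -lt0n.
have r_ge0 : 0 <= r by apply: le_trans root_le; rewrite mulr_ge0 ?powR_ge0.
apply: lerXn2r; rewrite ?nnegrE ?powR_ge0 ?divr_ge0 //.
by rewrite ler_pdivlMr // mulrC.
Qed.

Lemma le_root_sum_of_dominated p (a r : R) (c : nat -> R) :
  0 < a -> 0 <= r -> (forall i, 0 <= c i) ->
  a * r ^+ p.+1 < \sum_(1 <= i < p.+1) c i * r ^+ i ->
  r <= 2 * \sum_(1 <= i < p.+1) (c i / a) `^ ((p - i + 1)%:R^-1).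
Proof.
move=> a_gt0 r_ge0 c_ge0 dominated; rewrite leNgt; apply/negP => r_gt.
have term_le i : (1 <= i < p.+1)%N ->
    c i * r ^+ i <= a * r ^+ p.+1 * 2^-1 ^+ (p - i + 1).
  move=> /andP[i_ge1 ip].
  have root_le : 2 * (c i / a) `^ ((p - i + 1)%:R^-1) <= r.
    apply: le_trans (ltW r_gt); rewrite ler_pM2l //.
    rewrite (bigD1_seq i) ?mem_index_iota ?i_ge1 ?iota_uniq //= lerDl.
    by apply: sumr_ge0 => j _; exact: powR_ge0.
  have := le_half_pow_of_root (divr_ge0 (c_ge0 i) (ltW a_gt0))
    (ltn_addl (p - i) (ltn0Sn 0)) root_le.
  rewrite ler_pdivrMr // => ci_le.
  have -> : a * r ^+ p.+1 * 2^-1 ^+ (p - i + 1) = (r / 2) ^+ (p - i + 1) * a * r ^+ i.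
    by rewrite exprMn (_ : p.+1 = p - i + 1 + i)%N ?exprD; [ring | lia].
  by apply: ler_wpM2r; rewrite ?exprn_ge0.
have := lt_le_trans dominated (ler_sum_nat term_le).
rewrite -mulr_sumr sum_half_pow ltNge => /negP; apply.
by rewrite ler_piMr ?mulr_ge0 ?exprn_ge0 ?(ltW a_gt0) // gerBl exprn_ge0.
Qed.

End PowerDomination.

Lemma eta_const_ge0 (R : realType) p (khigh vth nu0 : R) : 0 <= eta_const p khigh vth nu0.
Proof. by apply: sumr_ge0 => i _; exact: powR_ge0. Qed.

Lemma le_nu_max (R : realType) p (Lp kg khigh vth nu0 : R) :
  0 <= Lp -> 0 < vth -> 2 * Lp / vth <= nu_max p Lp kg khigh vth nu0.
Proof.
move=> Lp_ge0 vth_gt0; rewrite /nu_max ler_peMr ?divr_ge0 ?mulr_ge0 ?(ltW vth_gt0) //.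
by rewrite lerDl exprn_ge0 // addr_ge0 ?mulr_ge0 ?powR_ge0 ?eta_const_ge0.
Qed.

Section SkoffarRealization.
Variables (R : realType) (n l p : nat) (f : 'cV[R]_n -> R) (Lp kg khigh nu0 vth : R).
Variables (x : nat -> 'cV[R]_n) (S : nat -> 'M[R]_(l, n)) (sh : nat -> 'cV[R]_l)
  (sigma nu : nat -> R).
Hypotheses (p_gt0 : (0 < p)%N) (f_smooth : AS1 f p) (f_lip : AS3 f p Lp)
  (f_grad : AS4 f kg) (f_high : AS5 f p khigh).
Hypotheses (nu0_gt0 : 0 < nu0) (vth_gt0 : 0 < vth).
Hypothesis nu_0 : nu 0 = nu0.
Hypothesis sigma_ge : forall k, vth * nu k <= sigma k.
Hypothesis model_decrease : forall k,
  mhat f p (x k) (S k) (sigma k) (sh k) < mhat f p (x k) (S k) (sigma k) 0.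
Hypothesis x_succ : forall k, x k.+1 = x k + (S k)^T *m sh k.
Hypothesis nu_succ : forall k, nu k.+1 = nu k + nu k * enorm ((S k)^T *m sh k) ^+ p.+1.

Local Notation step k := ((S k)^T *m sh k).
Local Notation F := ((p.+1)`!%:R : R).

Let F_gt0 : 0 < F. Proof. by rewrite ltr0n fact_gt0. Qed.
Let Lp_ge0 : 0 <= Lp. Proof. by case: f_lip. Qed.

Lemma nu_ge_nu0 k : nu0 <= nu k.
Proof.
elim: k => [|k IH]; first by rewrite nu_0.
rewrite nu_succ (le_trans IH) // lerDl mulr_ge0 ?exprn_ge0 ?enorm_ge0 //.
exact: le_trans (ltW nu0_gt0) IH.
Qed.

Lemma sigma_ge0 k : 0 <= sigma k.
Proof.
apply: le_trans (sigma_ge k); rewrite mulr_ge0 ?(ltW vth_gt0) //.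
exact: le_trans (ltW nu0_gt0) (nu_ge_nu0 k).
Qed.

Lemma Tfp_step_lt k :
  Tfp f p (x k) (step k) + sigma k / F * enorm (step k) ^+ p.+1 < f (x k).
Proof.
have := model_decrease k.
by rewrite /mhat /That mulmx0 Tfp0 // enorm0 expr0n /= mulr0 addr0.
Qed.

Lemma f_succ_le k : f (x k.+1) <= f (x k) + (Lp - sigma k) / F * enorm (step k) ^+ p.+1.
Proof.
have := Tfp_upper_bound (x k) (step k) f_smooth f_lip.
have := Tfp_step_lt k; rewrite x_succ !mulrBl; lra.
Qed.

Lemma f_le_nu k : f (x k) <= f (x 0) + Lp / nu0 * (nu k - nu0) / F.
Proof.
elim: k => [|k IH]; first by rewrite nu_0 subrr mulr0 mul0r addr0.
apply: le_trans (f_succ_le k) _; set A := enorm (step k) ^+ p.+1.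
have A_ge0 : 0 <= A by rewrite exprn_ge0 ?enorm_ge0.
have -> : Lp / nu0 * (nu k.+1 - nu0) / F =
    Lp / nu0 * (nu k - nu0) / F + Lp * (nu k / nu0) * A / F by rewrite nu_succ /A; ring.
rewrite addrA lerD // mulrAC ler_pM2r ?invr_gt0 // ler_wpM2r //.
apply: le_trans (_ : Lp <= _); first by rewrite gerBl sigma_ge0.
by rewrite ler_peMr // ler_pdivlMr // mul1r nu_ge_nu0.
Qed.

Local Notation step_bound :=
  (2 * eta_const p khigh vth nu0 + 2 * (F * kg / (vth * nu0)) `^ (p%:R^-1)).

Lemma enorm_step_le k : enorm (step k) <= step_bound.
Proof.
pose a := vth * nu0 / F.
have a_gt0 : 0 < a by rewrite divr_gt0 ?mulr_gt0.
have c_ge0 i : 0 <= taylor_term_bound kg khigh i.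
  rewrite /taylor_term_bound; case: ifP => _; first by case: f_grad.
  by rewrite divr_ge0 ?ler0n //; case: f_high.
have dominated : a * enorm (step k) ^+ p.+1 <
    \sum_(1 <= i < p.+1) taylor_term_bound kg khigh i * enorm (step k) ^+ i.
  have a_le : a <= sigma k / F.
    rewrite ler_pM2r ?invr_gt0 //; apply: le_trans (sigma_ge k).
    by rewrite ler_pM2l // nu_ge_nu0.
  have := Tfp_lower_bound (x k) (step k) p_gt0 f_smooth f_grad f_high.
  have := Tfp_step_lt k.
  have := ler_wpM2r (exprn_ge0 p.+1 (enorm_ge0 (step k))) a_le; lra.
suff <- : 2 * \sum_(1 <= i < p.+1) (taylor_term_bound kg khigh i / a) `^ ((p - i + 1)%:R^-1)
    = step_bound.
  exact: le_root_sum_of_dominated a_gt0 (enorm_ge0 _) c_ge0 dominated.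
rewrite big_ltn // mulrDr addrC /taylor_term_bound eqxx subnK //.
congr (2 * _ + 2 * (_ `^ _)); last first.
  by rewrite /a; field; rewrite !gt_eqF.
apply: eq_big_nat => i /andP[i_ge2 _]; rewrite gtn_eqF //; congr (_ `^ _).
by rewrite /a; field; rewrite pnatr_eq0 -lt0n fact_gt0 !gt_eqF.
Qed.

Lemma nu_succ_le_nu_max k :
  nu k <= 2 * Lp / vth -> nu k.+1 <= nu_max p Lp kg khigh vth nu0.
Proof.
move=> nu_k_le; have step_bound_ge0 : 0 <= step_bound.
  by rewrite addr_ge0 ?mulr_ge0 ?powR_ge0 ?eta_const_ge0.
rewrite nu_succ -[X in X + _]mulr1 -mulrDr /nu_max.
have nu_k_ge0 : 0 <= nu k := le_trans (ltW nu0_gt0) (nu_ge_nu0 k).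
rewrite ler_pM ?addr_ge0 ?exprn_ge0 ?enorm_ge0 // lerD2l.
by apply: lerXn2r; rewrite ?nnegrE ?enorm_ge0 ?enorm_step_le.
Qed.

Lemma f_le_f_max k :
  nu k - nu0 <= nu_max p Lp kg khigh vth nu0 -> f (x k) <= f_max f (x 0) p Lp kg khigh vth nu0.
Proof.
move=> nu_k_le; apply: le_trans (f_le_nu k) _.
rewrite /f_max /= lerD2l mulrC ler_pM2l ?invr_gt0 //.
apply: le_trans (_ : Lp / nu0 * nu_max p Lp kg khigh vth nu0 <= _).
  by rewrite ler_wpM2l // divr_ge0 // ltW.
by rewrite lerDl mulr_ge0 // ltW.
Qed.

Lemma f_le_f_max_succ K : sigma 0 = nu0 -> vth <= 1 ->
  (forall k, (0 < k <= K)%N -> nu k < 2 * Lp / vth) ->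
  f (x K.+1) <= f_max f (x 0) p Lp kg khigh vth nu0.
Proof.
move=> sigma_0 vth_le1 nu_lt.
have nu_max_ge := le_nu_max p kg khigh nu0 Lp_ge0 vth_gt0.
have two_Lp_ge0 : 0 <= 2 * Lp / vth by rewrite divr_ge0 ?mulr_ge0 ?(ltW vth_gt0).
have nu_K_sub_le : nu K - nu0 <= 2 * Lp / vth.
  case: K nu_lt => [|K] nu_lt; first by rewrite nu_0 subrr.
  by rewrite lerBlDr (le_trans (ltW (nu_lt K.+1 (leqnn _)))) // lerDl (ltW nu0_gt0).
have [Lp_le_sigma|sigma_lt_Lp] := leP Lp (sigma K).
  apply: le_trans (f_succ_le K) (le_trans _ (f_le_f_max (le_trans nu_K_sub_le nu_max_ge))).
  by rewrite gerDl mulr_le0_ge0 ?exprn_ge0 ?enorm_ge0 // mulr_le0_ge0 ?invr_ge0 ?ler0n ?subr_le0.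
have nu_K_le_bound : nu K <= 2 * Lp / vth.
  case: K nu_lt {nu_K_sub_le} sigma_lt_Lp => [|K] nu_lt sigma_lt_Lp.
    2: exact: ltW (nu_lt K.+1 (leqnn _)).
  rewrite nu_0 -sigma_0 (le_trans (ltW sigma_lt_Lp)) // ler_pdivlMr // mulrC ler_wpM2r //.
  by rewrite (le_trans vth_le1) // ler1n.
apply: f_le_f_max; apply: le_trans _ (nu_succ_le_nu_max nu_K_le_bound).
by rewrite gerBl (ltW nu0_gt0).
Qed.

End SkoffarRealization.

Theorem mainTheorem5 (R : realType) (n l p : nat) (f : 'cV[R]_n -> R)
  (Lp kg khigh : R)
  (nu0 eps theta mum1 vth : R)
  (x : nat -> 'cV[R]_n) (S : nat -> 'M[R]_(l, n)) (sh : nat -> 'cV[R]_l)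
  (sigma nu kS : nat -> R) (k1 : nat) :
  (1 <= p)%N -> (l < n)%N ->
  AS1 f p -> AS3 f p Lp -> AS4 f kg -> AS5 f p khigh ->
  0 < nu0 -> 0 < eps <= 1 -> 1 < theta -> 0 <= mum1 -> 0 < vth < 1 ->
  skoffar_realization f p nu0 theta mum1 vth x S sh sigma nu kS ->
  (* K_1 occurs: k1 = inf {k >= 1 : nu_k >= 2 Lp / vth} is finite *)
  (1 <= k1)%N -> 2 * Lp / vth <= nu k1 ->
  (forall k, (1 <= k < k1)%N -> nu k < 2 * Lp / vth) ->
  f (x k1) <= f_max f (x 0%N) p Lp kg khigh vth nu0.
Proof.
move=> p_gt0 _ f_smooth f_lip f_grad f_high nu0_gt0 _ _ _ /andP[vth_gt0 vth_lt1]
  [nu_0 [sigma_0 [sigma_between [_ [model_decrease [_ [x_succ nu_succ]]]]]]].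
case: k1 => [//|K] _ _ nu_lt.
have sigma_ge k : vth * nu k <= sigma k.
  case: k => [|k]; last by case/andP: (sigma_between k.+1 isT).
  by rewrite sigma_0 nu_0 ler_piMl ?ltW.
exact: (f_le_f_max_succ p_gt0 f_smooth f_lip f_grad f_high nu0_gt0 vth_gt0 nu_0
  sigma_ge model_decrease x_succ nu_succ sigma_0 (ltW vth_lt1) nu_lt).
Qed.
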